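(* Let $F_1,F_2$ be bijections of $\mathbb F_2^m$ with $F_1(0)=F_2(0)=0$, and $S=STS(\mathcal H^n)$. If the self-embeddings $S\cup F_1(S)$ and $S\cup F_2(S)$ are isomorphic, then the codes $\mathcal C_{F_1}$ and $\mathcal C_{F_2}$ are equivalent.
   Context: $n=2^m-1$; identify $\mathbb F_2^m$ with $GF(2^m)$. $S=STS(\mathcal H^n)$ is the set of 3-subsets $\{a,b,c\}$ of nonzero elements with $a+b+c=0$; $F(S)=\{\{F(a),F(b),F(c)\}:\{a,b,c\}\in S\}$. Self-embeddings $S\cup F_1(S)$, $S\cup F_2(S)$ are isomorphic if there is a permutation $\sigma$ of the nonzero elements with either $\sigma(S)=S,\sigma(F_1(S))=F_2(S)$ or $\sigma(S)=F_2(S),\sigma(F_1(S))=S$. For a bijection $F$ with $F(0)=0$, $\mathcal C_F$ is the binary linear code of length $n$ whose parity-check matrix is the $2m\times n$ matrix whose columns are $\binom{x}{F(x)}$, $x$ ranging over the nonzero vectors of $\mathbb F_2^m$ (coordinates indexed by the nonzero $x$). Two binary codes of length $n$ are equivalent if one is obtained from the other by a coordinate permutation and a translation (for linear codes, equivalently by a coordinate permutation). *)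

From HB Require Import structures.
From mathcomp Require Import all_boot all_order all_fingroup all_algebra.
Set Implicit Arguments. Unset Strict Implicit. Unset Printing Implicit Defensive.
Import GRing.Theory.
Local Open Scope ring_scope.

(* F_2^m, identified with GF(2^m) as an F_2-vector space *)
Definition Vec (m : nat) := 'rV['F_2]_m.

(* the nonzero vectors: points of STS(H^n), n = 2^m - 1; also the coordinate set *)
Definition Pts (m : nat) := {x : Vec m | x != 0}.

Definition STS (m : nat) : {set {set Vec m}} :=
  [set T : {set Vec m} | [exists a : Vec m, exists b : Vec m, exists c : Vec m,
     [&& a != 0, b != 0, c != 0, a != b, a != c, b != c,
         a + b + c == 0 & T == [set a; b; c]]]].

Definition imgTriples (m : nat) (F : Vec m -> Vec m) (X : {set {set Vec m}})
  : {set {set Vec m}} := [set F @: T | T : {set Vec m} in X].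

Definition imgSTS (m : nat) (F : Vec m -> Vec m) : {set {set Vec m}} :=
  imgTriples F (STS m).

(* Isomorphism of the self-embeddings S ∪ F1(S) and S ∪ F2(S): a permutation
   sigma of the nonzero vectors (represented as a permutation of F_2^m fixing 0)
   with sigma(S)=S and sigma(F1(S))=F2(S), or sigma(S)=F2(S) and sigma(F1(S))=S. *)
Definition selfemb_iso (m : nat) (F1 F2 : Vec m -> Vec m) : Prop :=
  exists sigma : {perm Vec m}, sigma 0 = 0 /\
    ((imgTriples sigma (STS m) = STS m /\
      imgTriples sigma (imgSTS F1) = imgSTS F2) \/
     (imgTriples sigma (STS m) = imgSTS F2 /\
      imgTriples sigma (imgSTS F1) = STS m)).

(* C_F: binary linear code of length n indexed by the nonzero x, with parity-check
   matrix whose columns are (x ; F x). *)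
Definition codeF (m : nat) (F : Vec m -> Vec m) : {set {ffun Pts m -> 'F_2}} :=
  [set c : {ffun Pts m -> 'F_2} |
     (\sum_(x : Pts m) c x *: val x == 0) && (\sum_(x : Pts m) c x *: F (val x) == 0)].

Definition codes_equiv (m : nat) (C1 C2 : {set {ffun Pts m -> 'F_2}}) : Prop :=
  exists (pi : {perm Pts m}) (v : {ffun Pts m -> 'F_2}),
    C2 = [set [ffun x => c (pi x) + v x] | c : {ffun Pts m -> 'F_2} in C1].

From HB Require Import structures.
From mathcomp Require Import all_boot all_order all_fingroup all_algebra.
Set Implicit Arguments. Unset Strict Implicit. Unset Printing Implicit Defensive.
Import GRing.Theory.
Local Open Scope ring_scope.

(* A bijection f of F_2^m with f 0 = 0 mapping every triple of S = STS(H^n)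
   onto a triple of S (a collineation of PG(m-1,2)) is additive, hence
   F_2-linear: apply the hypothesis to the line {a, b, a+b}.
   Write C(u, w) for the code with parity-check columns (u x ; w x), so that
   C_F = C(id, F).  This code does not change when u or w is composed with an
   injective linear map, nor when u and w are swapped, and relabelling the
   coordinates by a bijection P fixing 0 gives an equivalence between
   C(u o P, w o P) and C(u, w).
   Given the isomorphism sigma, put P = F2^-1 o sigma o F1, so that
   C_F2 = C(id, F2) is equivalent to C(P, sigma o F1).  If sigma(S) = S and
   sigma(F1(S)) = F2(S), both P and sigma are collineations, so
   C(P, sigma o F1) = C(id, F1).  Otherwise A = F2^-1 o sigma and
   B = sigma o F1 are collineations, and C(A o F1, B) = C(F1, id) = C(id, F1). *)

Lemma two_F2 : 2%:R = 0 :> 'F_2.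
Proof. exact/val_inj. Qed.

Lemma F2_cases (c : 'F_2) : c = 0 \/ c = 1.
Proof. by case: c => [[|[|k]] //] Hk; [left | right]; apply/val_inj. Qed.

Lemma addvv m (v : Vec m) : v + v = 0.
Proof. by rewrite -mulr2n -scaler_nat two_F2 scale0r. Qed.

Lemma addv_eq0 m (x y : Vec m) : (x + y == 0) = (x == y).
Proof.
have oppv : - y = y by rewrite -[LHS]addr0 -(addvv y) addKr.
by rewrite -[y in x + y]oppv subr_eq0.
Qed.

Lemma neq_addr m (a b : Vec m) : b != 0 -> a != a + b.
Proof. by rewrite -{1}[a]addr0 (inj_eq (addrI a)) eq_sym. Qed.

Lemma neq_addl m (a b : Vec m) : a != 0 -> b != a + b.
Proof. by rewrite addrC; apply: neq_addr. Qed.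

Lemma sum_set3 (T : finType) (V : nmodType) (f : T -> V) a b c :
  a != b -> a != c -> b != c -> \sum_(z in [set a; b; c]) f z = f a + f b + f c.
Proof.
move=> ab ac bc; rewrite -setUA big_setU1 /=; last by rewrite !inE negb_or ab ac.
by rewrite big_setU1 /= ?big_set1 ?addrA // !inE bc.
Qed.

Lemma sum_STS m T : T \in STS m -> \sum_(z in T) z = 0.
Proof.
rewrite inE => /existsP[a /existsP[b /existsP[c]]].
case/and4P => _ _ _ /and5P[ab ac bc /eqP abc /eqP ->].
by rewrite sum_set3.
Qed.

Lemma line_STS m (a b : Vec m) :
  a != 0 -> b != 0 -> a != b -> [set a; b; a + b] \in STS m.
Proof.
move=> a0 b0 ab; rewrite inE; apply/existsP; exists a; apply/existsP; exists b.
apply/existsP; exists (a + b).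
rewrite a0 b0 addv_eq0 ab /= addv_eq0 !eqxx ab andbT /=.
by rewrite neq_addr ?neq_addl.
Qed.

Definition collineation m (f : Vec m -> Vec m) : Prop :=
  forall T, T \in STS m -> f @: T \in STS m.

(* An injective collineation fixing 0 is additive: it maps the line
   {a, b, a + b} to a line, whose points sum to 0. *)
Lemma collineation_additive m (f : Vec m -> Vec m) :
  injective f -> f 0 = 0 -> collineation f -> {morph f : a b / a + b}.
Proof.
move=> f_inj f0 f_col a b.
have [-> | a0] := eqVneq a 0; first by rewrite f0 !add0r.
have [-> | b0] := eqVneq b 0; first by rewrite f0 !addr0.
have [<- | ab] := eqVneq a b; first by rewrite !addvv f0.
have fab := sum_STS (f_col _ (line_STS a0 b0 ab)).
rewrite big_imset /= in fab; last by move=> x y _ _; apply: f_inj.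
rewrite sum_set3 ?neq_addr ?neq_addl // in fab.
by apply/eqP; rewrite eq_sym -addv_eq0 fab.
Qed.

Section AdditiveMaps.
Variables (m : nat) (M : Vec m -> Vec m).
Hypotheses (M_inj : injective M) (M_add : {morph M : a b / a + b}).

Lemma additive0 : M 0 = 0.
Proof. by have := M_add 0 0; rewrite addr0 => ->; rewrite addvv. Qed.

Lemma additive_lincomb (I : finType) (c : I -> 'F_2) (v : I -> Vec m) :
  M (\sum_i c i *: v i) = \sum_i c i *: M (v i).
Proof.
rewrite (big_morph M M_add additive0); apply: eq_bigr => i _.
by case: (F2_cases (c i)) => ->; rewrite ?scale0r ?scale1r ?additive0.
Qed.

Lemma additive_lincomb_eq0 (I : finType) (c : I -> 'F_2) (v : I -> Vec m) :
  (\sum_i c i *: M (v i) == 0) = (\sum_i c i *: v i == 0).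
Proof. by rewrite -additive_lincomb -[X in M _ == X]additive0 (inj_eq M_inj). Qed.

End AdditiveMaps.

Definition checkCode m (u w : Vec m -> Vec m) : {set {ffun Pts m -> 'F_2}} :=
  [set c : {ffun Pts m -> 'F_2} |
     (\sum_(x : Pts m) c x *: u (val x) == 0) &&
     (\sum_(x : Pts m) c x *: w (val x) == 0)].

Lemma codeF_checkCode m (F : Vec m -> Vec m) : codeF F = checkCode id F.
Proof. by []. Qed.

Lemma eq_checkCode m (u u' w w' : Vec m -> Vec m) :
  u =1 u' -> w =1 w' -> checkCode u w = checkCode u' w'.
Proof.
move=> eq_u eq_w; apply/setP => c; rewrite !inE.
by under eq_bigr do rewrite eq_u; under [X in _ && (X == 0)]eq_bigr do rewrite eq_w.
Qed.

Lemma checkCode_sym m (u w : Vec m -> Vec m) : checkCode u w = checkCode w u.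
Proof. by apply/setP => c; rewrite !inE andbC. Qed.

Lemma checkCode_comp m (M1 M2 u w : Vec m -> Vec m) :
  injective M1 -> {morph M1 : a b / a + b} ->
  injective M2 -> {morph M2 : a b / a + b} ->
  checkCode (fun x => M1 (u x)) (fun x => M2 (w x)) = checkCode u w.
Proof.
move=> M1_inj M1_add M2_inj M2_add; apply/setP => c; rewrite !inE.
by rewrite (additive_lincomb_eq0 M1_inj M1_add) (additive_lincomb_eq0 M2_inj M2_add).
Qed.

Section Relabel.
Variables (m : nat) (P : Vec m -> Vec m).
Hypotheses (P_inj : injective P) (P0 : P 0 = 0).

Lemma relabel_neq0 (x : Pts m) : P (val x) != 0.
Proof. by apply: contra (valP x) => /eqP Px0; apply/eqP/P_inj; rewrite Px0 P0. Qed.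

Definition relabel (x : Pts m) : Pts m := exist _ (P (val x)) (relabel_neq0 x).

Lemma relabel_inj : injective relabel.
Proof. by move=> x y /(congr1 val) /P_inj /val_inj. Qed.

Lemma checkCode_relabel (u w : Vec m -> Vec m) :
  codes_equiv (checkCode (fun x => u (P x)) (fun x => w (P x))) (checkCode u w).
Proof.
pose Q := perm relabel_inj.
have relabelP (d : {ffun Pts m -> 'F_2}) :
    ([ffun x => d (Q x)] \in checkCode (fun x => u (P x)) (fun x => w (P x)))
    = (d \in checkCode u w).
  rewrite !inE [X in _ = (X == 0) && _](reindex_inj relabel_inj).
  rewrite [X in _ = _ && (X == 0)](reindex_inj relabel_inj) /=.
  by congr (_ && _); congr (_ == 0); apply: eq_bigr => x _; rewrite ffunE permE.
exists Q^-1%g, 0; apply/setP => d; apply/idP/imsetP.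
- move=> d_in; exists [ffun x => d (Q x)]; first by rewrite relabelP.
  by apply/ffunP => y; rewrite !ffunE permKV addr0.
- case=> c c_in ->; rewrite -relabelP.
  suff -> : [ffun x => [ffun y => c (Q^-1%g y) + (0 : {ffun Pts m -> 'F_2}) y] (Q x)] = c
    by [].
  by apply/ffunP => x; rewrite !ffunE permK addr0.
Qed.

End Relabel.

Lemma mem_imgTriples m (f : Vec m -> Vec m) (X : {set {set Vec m}}) (T : {set Vec m}) :
  T \in X -> f @: T \in imgTriples f X.
Proof. exact: imset_f. Qed.

Lemma collineation_pullback m (F g f : Vec m -> Vec m) :
  cancel F g -> (forall T, T \in STS m -> f @: T \in imgSTS F) ->
  collineation (fun x => g (f x)).
Proof.
move=> FK f_to_img T T_in; have /imsetP[T' T'_in fT] := f_to_img T T_in.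
by rewrite (imset_comp g f) /= fT -imset_comp (eq_imset _ FK) imset_id.
Qed.

Section SelfEmbeddingIsomorphism.
Variables (m : nat) (F1 F2 g : Vec m -> Vec m) (sigma : {perm Vec m}).
Hypotheses (F1_inj : injective F1) (F10 : F1 0 = 0)
  (F20 : F2 0 = 0) (F2K : cancel F2 g) (gK : cancel g F2) (sigma0 : sigma 0 = 0).

Definition isoRelabel (x : Vec m) : Vec m := g (sigma (F1 x)).

Lemma F2_inv0 : g 0 = 0.
Proof. by rewrite -{1}F20 F2K. Qed.

Lemma isoRelabel_inj : injective isoRelabel.
Proof. by move=> x y /(can_inj gK) /perm_inj /F1_inj. Qed.

Lemma isoRelabel0 : isoRelabel 0 = 0.
Proof. by rewrite /isoRelabel F10 sigma0 F2_inv0. Qed.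

(* First case: sigma(S) = S and sigma(F1(S)) = F2(S); then sigma and P are
   collineations, and the columns of C(P, F2 o P) are (P x ; sigma (F1 x)). *)
Lemma codeF_iso_direct :
  imgTriples sigma (STS m) = STS m -> imgTriples sigma (imgSTS F1) = imgSTS F2 ->
  codeF F1 = checkCode isoRelabel (fun x => F2 (isoRelabel x)).
Proof.
move=> sigmaS sigmaF1S.
have sigma_col : collineation sigma.
  by move=> T T_in; rewrite -sigmaS mem_imgTriples.
have P_col : collineation isoRelabel.
  apply: (collineation_pullback F2K) => T T_in.
  by rewrite -sigmaF1S imset_comp !mem_imgTriples.
have P_add := collineation_additive isoRelabel_inj isoRelabel0 P_col.
have sigma_add := collineation_additive (@perm_inj _ sigma) sigma0 sigma_col.
rewrite codeF_checkCode.
rewrite -(@checkCode_comp _ _ _ id F1 isoRelabel_inj P_add (@perm_inj _ sigma) sigma_add).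
by apply: eq_checkCode => x //; rewrite /isoRelabel gK.
Qed.

(* Second case: sigma(S) = F2(S) and sigma(F1(S)) = S; then F2^-1 o sigma and
   sigma o F1 are collineations, and the columns of C(P, F2 o P) are
   ((F2^-1 o sigma) (F1 x) ; (sigma o F1) x). *)
Lemma codeF_iso_swapped :
  imgTriples sigma (STS m) = imgSTS F2 -> imgTriples sigma (imgSTS F1) = STS m ->
  codeF F1 = checkCode isoRelabel (fun x => F2 (isoRelabel x)).
Proof.
move=> sigmaS sigmaF1S.
have A_col : collineation (fun x => g (sigma x)).
  by apply: (collineation_pullback F2K) => T T_in; rewrite -sigmaS mem_imgTriples.
have B_col : collineation (fun x => sigma (F1 x)).
  by move=> T T_in; rewrite -sigmaF1S imset_comp !mem_imgTriples.
have A_inj : injective (fun x => g (sigma x)) by move=> x y /(can_inj gK) /perm_inj.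
have B_inj : injective (fun x => sigma (F1 x)) by move=> x y /perm_inj /F1_inj.
have A_add := collineation_additive A_inj (etrans (congr1 g sigma0) F2_inv0) A_col.
have B_add := collineation_additive B_inj (etrans (congr1 sigma F10) sigma0) B_col.
rewrite codeF_checkCode checkCode_sym.
rewrite -(@checkCode_comp _ _ _ F1 id A_inj A_add B_inj B_add).
by apply: eq_checkCode => x //; rewrite /isoRelabel gK.
Qed.

End SelfEmbeddingIsomorphism.

Theorem mainTheorem11 (m : nat) (F1 F2 : Vec m -> Vec m) :
  bijective F1 -> bijective F2 -> F1 0 = 0 -> F2 0 = 0 ->
  selfemb_iso F1 F2 ->
  codes_equiv (codeF F1) (codeF F2).
Proof.
move=> [? F1K _] [g F2K gK] F10 F20 [sigma [sigma0 iso]].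
have F1_inj := can_inj F1K.
have -> : codeF F1 = checkCode (isoRelabel F1 g sigma)
                               (fun x => F2 (isoRelabel F1 g sigma x)).
  by case: iso => -[sigmaS sigmaF1S];
    [exact: codeF_iso_direct | exact: codeF_iso_swapped].
rewrite codeF_checkCode.
exact: (checkCode_relabel (isoRelabel_inj F1_inj gK)
                          (isoRelabel0 F10 F20 F2K sigma0) id F2).
Qed.
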